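(* Let $G$ be a topological groupoid such that $G^{(0)}$ is locally compact and $r\colon G\to G^{(0)}$ is open. Suppose that $(r,s)(G)$ is locally closed in $G^{(0)}\times G^{(0)}$. Then the orbit space $G^{(0)}/G$ (with the quotient topology) is locally compact. Furthermore, (a) if $G^{(0)}$ is $\sigma$-compact, then $G^{(0)}/G$ is $\sigma$-compact; (b) if $(r,s)(G)$ is closed (for instance if $G$ is proper), then $G^{(0)}/G$ is Hausdorff.
   Context: Compact: quasi-compact (every open cover has a finite subcover) and Hausdorff; locally compact: every point has a compact neighbourhood (not necessarily Hausdorff); $\sigma$-compact: countable union of compact subsets. A subset is locally closed if it is the intersection of an open and a closed set. $G$ is proper if $(r,s)\colon G\to G^{(0)}\times G^{(0)}$ is closed with quasi-compact fibres. *)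

From HB Require Import structures.
From mathcomp Require Import all_boot all_order all_algebra.
From mathcomp Require Import all_classical all_reals all_analysis.
From mathcomp Require Import generic_quotient.
Set Implicit Arguments. Unset Strict Implicit. Unset Printing Implicit Defensive.
Local Open Scope classical_set_scope.

(* A topological groupoid: arrow space G, unit space X (= G^(0)), range r,
   source s, unit inclusion u, partial multiplication mul (meaningful on
   composable pairs s g = r h), inversion inv. *)
Record top_groupoid (G X : topologicalType) := TopGroupoid {
  gr : G -> X;
  gs : G -> X;
  gu : X -> G;
  gmul : G -> G -> G;
  ginv : G -> G;
  gr_u : forall x, gr (gu x) = x;
  gs_u : forall x, gs (gu x) = x;
  gr_mul : forall g h, gs g = gr h -> gr (gmul g h) = gr g;
  gs_mul : forall g h, gs g = gr h -> gs (gmul g h) = gs h;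
  gmulA : forall g h k, gs g = gr h -> gs h = gr k ->
    gmul (gmul g h) k = gmul g (gmul h k);
  gmul_ul : forall g, gmul (gu (gr g)) g = g;
  gmul_ur : forall g, gmul g (gu (gs g)) = g;
  gr_inv : forall g, gr (ginv g) = gs g;
  gs_inv : forall g, gs (ginv g) = gr g;
  gmulV : forall g, gmul g (ginv g) = gu (gr g);
  gmulVl : forall g, gmul (ginv g) g = gu (gs g);
  gr_cont : continuous gr;
  gs_cont : continuous gs;
  gu_cont : continuous gu;
  ginv_cont : continuous ginv;
  gmul_cont : {within [set p : G * G | gs p.1 = gr p.2],
                continuous (fun p : G * G => gmul p.1 p.2)}
}.

Local Open Scope quotient_scope.
Section orbits.
Context {G X : topologicalType} (Gd : top_groupoid G X).

Definition orbit_relP (x y : X) : Prop := exists g, gr Gd g = x /\ gs Gd g = y.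
Definition orbit_rel_b (x y : X) : bool := `[< orbit_relP x y >].

Lemma orbit_rel_refl : reflexive orbit_rel_b.
Proof. by move=> x; apply/asboolP; exists (gu Gd x); rewrite gr_u gs_u. Qed.

Lemma orbit_rel_sym : symmetric orbit_rel_b.
Proof.
have H x y : orbit_rel_b x y -> orbit_rel_b y x.
  move=> /asboolP [g [<- <-]]; apply/asboolP; exists (ginv Gd g).
  by rewrite gr_inv gs_inv.
by move=> x y; apply/idP/idP; exact: H.
Qed.

Lemma orbit_rel_trans : transitive orbit_rel_b.
Proof.
move=> y x z /asboolP [g [<- e1]] /asboolP [h [e2 <-]]; apply/asboolP.
have c : gs Gd g = gr Gd h by rewrite e1 e2.
by exists (gmul Gd g h); rewrite gr_mul // gs_mul.
Qed.

Definition orbit_rel : equiv_rel X :=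
  EquivRel orbit_rel_b orbit_rel_refl orbit_rel_sym orbit_rel_trans.

Definition orbit_space : topologicalType :=
  quotient_topology {eq_quot orbit_rel}.

Definition rs_image : set (X * X) := range (fun g => (gr Gd g, gs Gd g)).
End orbits.

Definition open_map (A B : topologicalType) (f : A -> B) :=
  forall U : set A, open U -> open (f @` U).

(* compact = quasi-compact and Hausdorff (in the subspace topology) *)
Definition pcompact (T : topologicalType) (K : set T) :=
  compact K /\
  forall x y, K x -> K y -> x <> y ->
    exists U V : set T, [/\ open U, open V, U x, V y & U `&` V = set0].

Definition plocally_compact (T : topologicalType) :=
  forall x : T, exists K : set T, nbhs x K /\ pcompact K.

Definition psigma_compact (T : topologicalType) :=
  exists K : nat -> set T, (forall n, pcompact (K n)) /\ \bigcup_n K n = setT.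

Definition locally_closed (T : topologicalType) (A : set T) :=
  exists U C : set T, [/\ open U, closed C & A = U `&` C].

(* The quotient map q : X -> X/G is open because r is: the saturation
   q^-1(q U) of an open U is r(s^-1 U).  Write (r,s)(G) = U ∩ C with U open and
   C closed.  If (a,b) lies outside C, a product neighbourhood A × B of (a,b)
   misses C, so no arrow joins A to B and q(A°), q(B°) are disjoint open sets.
   Since (x,x) ∈ U, every x has a compact Hausdorff neighbourhood L with
   L × L ⊆ U; two points of L in different orbits are then outside C, so q(L)
   is a compact Hausdorff neighbourhood of q x.  If X is σ-compact, each
   q(K_n) is covered by finitely many such neighbourhoods, giving countably
   many in total.  If (r,s)(G) is closed, take C = (r,s)(G) to separate any
   two orbits. *)

From HB Require Import structures.
From mathcomp Require Import all_boot all_order all_algebra.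
From mathcomp Require Import all_classical all_reals all_analysis.
From mathcomp Require Import generic_quotient finmap.
Set Implicit Arguments.
Unset Strict Implicit.
Unset Printing Implicit Defensive.
Local Open Scope classical_set_scope.

Definition open_separated (T : topologicalType) (x y : T) :=
  exists U V : set T, [/\ open U, open V, U x, V y & U `&` V = set0].

(* [compact_cover] is only available in pointed spaces; any point of a
   nonempty compact set makes the space pointed. *)
Definition pointed_copy {T : Type} (t0 : T) : Type := T.

Section pointed_copy.
Context {T : topologicalType} (t0 : T).
HB.instance Definition _ := Topological.copy (pointed_copy t0) T.
HB.instance Definition _ := isPointed.Build (pointed_copy t0) t0.
End pointed_copy.

Lemma compact_cover_compact (T : topologicalType) (A : set T) :
  compact A -> cover_compact A.
Proof.
have [[t0 _]|A0] := pselect (A !=set0).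
  by rewrite -[compact A]/(@compact (pointed_copy t0) A) compact_cover.
move=> _ I D f _ _; exists fset0 => // x Ax.
by exfalso; apply: A0; exists x.
Qed.

Lemma compact_separated_nbhs (T : topologicalType) (x : T) (F : set T) :
  compact F -> (forall y, F y -> open_separated x y) ->
  exists U V : set T, [/\ nbhs x U, open V, F `<=` V & U `&` V = set0].
Proof.
move=> cF sepF.
have sepUV y : exists UV : set T * set T, F y ->
    [/\ open UV.1, open UV.2, UV.1 x, UV.2 y & UV.1 `&` UV.2 = set0].
  have [Fy|nFy] := pselect (F y); last by exists (setT, setT).
  by have [U [V sepUV]] := sepF y Fy; exists (U, V).
have [UV UVP] := choice sepUV.
have [D DF FD] : finite_subset_cover F (fun y => (UV y).2) F.
  apply: compact_cover_compact => // [y /UVP[]//|y Fy].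
  by exists y => //; case: (UVP y Fy).
have DF' y : y \in D -> F y by move=> /DF /set_mem.
exists (\bigcap_(y in [set` D]) (UV y).1), (\bigcup_(y in [set` D]) (UV y).2).
split => //.
- by apply: filter_bigI => y /DF'/UVP[oU _ Ux _ _]; exact: open_nbhs_nbhs.
- by apply: bigcup_open => y /DF'/UVP[].
apply/seteqP; split => // z [Uz [y Dy Vz]].
by case: (UVP y (DF' y Dy)) => _ _ _ _ <-; split => //; exact: Uz.
Qed.

Lemma pcompact_closedI (T : topologicalType) (K C : set T) :
  pcompact K -> closed C -> pcompact (K `&` C).
Proof.
move=> [cK sepK] cC; split; first exact: compact_closedI.
by move=> x y [Kx _] [Ky _]; exact: sepK.
Qed.

Lemma pcompact_nbhs_subset (T : topologicalType) (x : T) (K W : set T) :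
  pcompact K -> nbhs x K -> nbhs x W ->
  exists L, [/\ nbhs x L, pcompact L & L `<=` W].
Proof.
move=> pK xK xW; have [cK sepK] := pK.
pose I := K° `&` W°.
have oI : open I by apply: openI; exact: open_interior.
have [U [V [xU oV KIV UV0]]] : exists U V : set T,
    [/\ nbhs x U, open V, K `&` ~` I `<=` V & U `&` V = set0].
  apply: compact_separated_nbhs.
    by apply: compact_closedI; rewrite ?closedC.
  move=> y [Ky nIy]; apply: sepK => //; first exact: nbhs_singleton.
  by move=> xy; apply: nIy; rewrite -xy.
exists (K `&` ~` V); split.
- apply: filterS (filterI (nbhs_interior xK) xU) => z [Kz Uz]; split.
    exact: interior_subset.
  by move=> Vz; suff : (U `&` V) z by rewrite UV0.
- by apply: pcompact_closedI => //; rewrite closedC.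
- move=> z [Kz nVz]; have [[_ Wz]|nIz] := pselect (I z).
    exact: interior_subset.
  by exfalso; apply: nVz; apply: KIV.
Qed.

Lemma open_map_nbhs (T U : topologicalType) (f : T -> U) (x : T) (L : set T) :
  open_map f -> nbhs x L -> nbhs (f x) (f @` L).
Proof.
move=> fo xL; apply: (@filterS _ _ _ (f @` L°)).
  by apply: image_subset; exact: interior_subset.
by apply: open_nbhs_nbhs; split; [apply: fo; exact: open_interior|exists x].
Qed.

Definition sigma_compact (T : topologicalType) :=
  exists K : nat -> set T, (forall n, compact (K n)) /\ \bigcup_n K n = setT.

Lemma psigma_compact_sigma (T : topologicalType) :
  psigma_compact T -> sigma_compact T.
Proof. by move=> [K [pK KT]]; exists K; split => // n; case: (pK n). Qed.

Lemma sigma_compact_image (T U : topologicalType) (f : T -> U) :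
  continuous f -> range f = setT -> sigma_compact T -> sigma_compact U.
Proof.
move=> fc fT [K [cK KT]]; exists (fun n => f @` K n); split => [n|].
  by apply: continuous_compact => //; exact: continuous_subspaceT.
by rewrite -image_bigcup KT.
Qed.

Lemma countable_pcompact_cover_psigma (T : topologicalType) (I : countType)
    (K : I -> set T) :
  (forall i, pcompact (K i)) -> \bigcup_i K i = setT -> psigma_compact T.
Proof.
move=> pK KT.
exists (fun n => if choice.unpickle n is Some i then K i else set0).
split => [n|].
  by case: (choice.unpickle n) => [i|]; [exact: pK|split; [exact: compact0|]].
apply/seteqP; split => // y _; have [i _ Kiy] : (\bigcup_i K i) y by rewrite KT.
by exists (choice.pickle i) => //; rewrite choice.pickleK.
Qed.

Lemma plocally_sigma_compact_psigma (T : topologicalType) :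
  plocally_compact T -> sigma_compact T -> psigma_compact T.
Proof.
move=> lcT [C [cC CT]]; have [Kz KzP] := choice lcT.
have coverC n :
    exists D : {fset T}, C n `<=` cover [set` D] (fun z => (Kz z)°).
  have Kz_open z : setT z -> open (Kz z)° by move=> _; exact: open_interior.
  have Kz_cover : C n `<=` cover setT (fun z => (Kz z)°).
    move=> y _; exists y => //.
    by apply: nbhs_singleton; apply: nbhs_interior; case: (KzP y).
  by have [D _ CD] := compact_cover_compact (cC n) Kz_open Kz_cover; exists D.
have [D DP] := choice coverC.
apply: (@countable_pcompact_cover_psigma _ {n : nat & D n}
  (fun i => Kz (val (tagged i)))) => [i|].
  by case: (KzP (val (tagged i))).
apply/seteqP; split => // y _; have [n _ Cny] : (\bigcup_n C n) y by rewrite CT.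
have [z /= Dz Kzy] := DP n y Cny.
by exists (Tagged (fun n => D n) [` Dz]%fset) => //; exact: interior_subset.
Qed.

Lemma open_separated_hausdorff (T : topologicalType) :
  (forall x y : T, x != y -> open_separated x y) -> hausdorff_space T.
Proof.
move=> sepT; rewrite open_hausdorff => x y /sepT [U [V [oU oV Ux Vy UV0]]].
by exists (U, V); rewrite /= ?in_setE ?UV0.
Qed.

Local Open Scope quotient_scope.

Section orbit_space.
Context {G X : topologicalType} (Gd : top_groupoid G X).

Definition orbit_map : X -> orbit_space Gd := \pi_(orbit_space Gd).

Lemma orbit_map_eq (a b : X) :
  orbit_map a = orbit_map b <-> orbit_relP Gd a b.
Proof.
rewrite -[orbit_map a = _]/(a = b %[mod {eq_quot orbit_rel Gd}]).
by split => [/eqquotP/asboolP //|ab]; apply/eqquotP/asboolP.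
Qed.

Lemma orbit_reprK : cancel repr orbit_map.
Proof. exact: reprK. Qed.

Lemma orbit_map_continuous : continuous orbit_map.
Proof. exact: pi_continuous. Qed.

Lemma orbit_map_range : range orbit_map = setT.
Proof.
by apply/seteqP; split => // z _; exists (repr z); rewrite ?orbit_reprK.
Qed.

Lemma rs_image_diag (x : X) : rs_image Gd (x, x).
Proof. by exists (gu Gd x); rewrite //= gr_u gs_u. Qed.

Lemma orbit_saturation (U : set X) :
  orbit_map @^-1` (orbit_map @` U) = gr Gd @` (gs Gd @^-1` U).
Proof.
apply/seteqP; split => x /=.
  case=> y Uy /orbit_map_eq [g [gy gx]]; exists (ginv Gd g) => /=.
    by rewrite gs_inv gy.
  by rewrite gr_inv.
case=> g /= Ugs <-; exists (gs Gd g) => //; apply/orbit_map_eq.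
by exists (ginv Gd g); rewrite gr_inv gs_inv.
Qed.

Lemma orbit_map_open : open_map (gr Gd) -> open_map orbit_map.
Proof.
move=> r_open U oU.
rewrite /open /= /quotient_open -[\pi_ _ @^-1` _]/(orbit_map @^-1` _).
rewrite orbit_saturation; apply: r_open.
by move/continuousP: (@gs_cont _ _ Gd); apply.
Qed.

Lemma orbit_space_psigma_compact :
  plocally_compact (orbit_space Gd) -> psigma_compact X ->
  psigma_compact (orbit_space Gd).
Proof.
move=> lcQ /psigma_compact_sigma sX; apply: plocally_sigma_compact_psigma => //.
exact: sigma_compact_image orbit_map_continuous orbit_map_range sX.
Qed.

Section open_range.
Hypothesis r_open : open_map (gr Gd).

Lemma orbit_map_separated (C : set (X * X)) (a b : X) :
  closed C -> rs_image Gd `<=` C -> ~ C (a, b) ->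
  open_separated (orbit_map a) (orbit_map b).
Proof.
move=> cC rsC nCab.
have [[A B] /= [aA bB] ABC] : nbhs (a, b) (~` C).
  by apply: open_nbhs_nbhs; split; rewrite ?openC.
exists (orbit_map @` A°), (orbit_map @` B°); split.
- by apply: orbit_map_open => //; exact: open_interior.
- by apply: orbit_map_open => //; exact: open_interior.
- by exists a => //; exact: nbhs_interior.
- by exists b => //; exact: nbhs_interior.
apply/seteqP; split => // _ [[a' Aa' <-] [b' Bb' /esym/orbit_map_eq]].
move=> [g [ga' gb']].
have : C (a', b') by apply: rsC; exists g; rewrite //= ga' gb'.
by apply: ABC; split; exact: interior_subset.
Qed.

Lemma orbit_space_plocally_compact :
  plocally_compact X -> locally_closed (rs_image Gd) ->
  plocally_compact (orbit_space Gd).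
Proof.
move=> lcX [U [C [oU cC rsUC]]] z; pose x := repr z.
have rsC : rs_image Gd `<=` C by rewrite rsUC => ? [].
have [[A B] /= [xA xB] ABU] : nbhs (x, x) U.
  apply: open_nbhs_nbhs; split => //.
  by have := rs_image_diag x; rewrite rsUC => -[].
have [K [xK pK]] := lcX x.
have [L [xL [cL _] LAB]] := pcompact_nbhs_subset pK xK (filterI xA xB).
exists (orbit_map @` L); split.
  by have := open_map_nbhs (orbit_map_open r_open) xL; rewrite /x orbit_reprK.
split.
  apply: continuous_compact => //; apply: continuous_subspaceT.
  exact: orbit_map_continuous.
move=> _ _ [a La <-] [b Lb <-] ab; apply: (orbit_map_separated cC rsC) => Cab.
have [g _ [ga gb]] : rs_image Gd (a, b).
  rewrite rsUC; split => //; apply: ABU.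
  by split; [case: (LAB a La)|case: (LAB b Lb)].
by apply: ab; apply/orbit_map_eq; exists g.
Qed.

Lemma orbit_space_hausdorff :
  closed (rs_image Gd) -> hausdorff_space (orbit_space Gd).
Proof.
move=> cR; apply: open_separated_hausdorff => z w zw.
rewrite -(orbit_reprK z) -(orbit_reprK w).
apply: (orbit_map_separated cR (@subset_refl _ _)) => -[g _ [gz gw]].
move/eqP: zw; apply; rewrite -(orbit_reprK z) -(orbit_reprK w).
by apply/orbit_map_eq; exists g.
Qed.
End open_range.
End orbit_space.

Theorem proposition2p12 (G X : topologicalType) (Gd : top_groupoid G X) :
  plocally_compact X ->
  open_map (gr Gd) ->
  locally_closed (rs_image Gd) ->
  [/\ plocally_compact (orbit_space Gd),
      (psigma_compact X -> psigma_compact (orbit_space Gd)) &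
      (closed (rs_image Gd) -> hausdorff_space (orbit_space Gd))].
Proof.
move=> lcX r_open rs_lc.
have lcQ := orbit_space_plocally_compact r_open lcX rs_lc.
split => //; first exact: orbit_space_psigma_compact.
exact: orbit_space_hausdorff.
Qed.
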